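(* Let $\mathcal{F}=(A,R)$ and $\mathcal{G}=(A,R')$ be argumentation frameworks with $R\subseteq R'$ and $\mathrm{conf}(\mathcal{F})=\mathrm{conf}(\mathcal{G})$, and let $S\in\mathit{cf1.5}(\mathcal{F})$. Then $S\in\mathit{cf1.5}(\mathcal{G})$. In particular, $\mathit{cf1.5}$ is both $\preceq^E_\cap$-skepticism adequate and $\preceq^E_W$-skepticism adequate.
   Context: An argumentation framework (AF) is $\mathcal{F}=(A_{\mathcal{F}},R_{\mathcal{F}})$ with $R_{\mathcal{F}}\subseteq A_{\mathcal{F}}\times A_{\mathcal{F}}$ (possibly infinite); $a\rightarrow b$ means $(a,b)\in R_{\mathcal{F}}$. $\mathrm{conf}(\mathcal{F})=\{(x,y):(x,y)\in R_{\mathcal{F}}\text{ or }(y,x)\in R_{\mathcal{F}}\}$. $\tau_1\preceq^E_\cap\tau_2$ iff $\bigcap_{S_1\in\tau_1}S_1\subseteq\bigcap_{S_2\in\tau_2}S_2$; $\tau_1\preceq^E_W\tau_2$ iff for every $S_2\in\tau_2$ there is $S_1\in\tau_1$ with $S_1\subseteq S_2$. A semantics $\sigma$ is $\preceq$-skepticism adequate if for any AFs $\mathcal{F},\mathcal{G}$ on the same argument set with $R_{\mathcal{F}}\supseteq R_{\mathcal{G}}$ and $\mathrm{conf}(\mathcal{F})=\mathrm{conf}(\mathcal{G})$, $\sigma(\mathcal{F})\preceq\sigma(\mathcal{G})$. $\mathcal{F}|_B=(A_{\mathcal{F}}\cap B,R_{\mathcal{F}}\cap(B\times B))$. Conflict-free: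 no $a,b\in S$ with $a\rightarrow b$; naive: $\subseteq$-maximal conflict-free. $\mathrm{SCC}(\mathcal{F})$: strongly connected components of the attack graph. $D_S(X)=\{b\in X:\exists a\in S\setminus X,\ a\rightarrow b\}$ (attacks taken in the framework under consideration). $S\in\mathit{cf1.5}(\mathcal{F})$ iff $S$ is conflict-free and for each $X\in\mathrm{SCC}(\mathcal{F})$, $S\cap X$ is a naive extension of $\mathcal{F}|_{X\setminus D_S(X)}$. *)

From Stdlib Require Import Relations.Relation_Operators.

Set Implicit Arguments.

Record AF (T : Type) := mkAF {
  args : T -> Prop;
  att : T -> T -> Prop;
  att_in : forall a b, att a b -> args a /\ args b
}.

Arguments args {T} _ _.
Arguments att {T} _ _ _.

Definition restrict {T} (F : AF T) (B : T -> Prop) : AF T.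
Proof.
  refine (@mkAF T (fun a => args F a /\ B a)
                  (fun a b => att F a b /\ B a /\ B b) _).
  intros a b [H [Ha Hb]]. destruct (att_in F a b H). tauto.
Defined.

Definition conf {T} (F : AF T) (x y : T) : Prop := att F x y \/ att F y x.

Definition conflict_free {T} (F : AF T) (S : T -> Prop) : Prop :=
  (forall a, S a -> args F a) /\ (forall a b, S a -> S b -> ~ att F a b).

Definition naive {T} (F : AF T) (S : T -> Prop) : Prop :=
  conflict_free F S /\
  forall S', conflict_free F S' -> (forall a, S a -> S' a) -> forall a, S' a -> S a.

Definition reach {T} (F : AF T) : T -> T -> Prop := clos_refl_trans T (att F).

Definition SCC {T} (F : AF T) (X : T -> Prop) : Prop :=
  exists a, args F a /\
    forall b, X b <-> (args F b /\ reach F a b /\ reach F b a).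

Definition D {T} (F : AF T) (S X : T -> Prop) (b : T) : Prop :=
  X b /\ exists a, S a /\ ~ X a /\ att F a b.

Definition cf15 {T} (F : AF T) (S : T -> Prop) : Prop :=
  conflict_free F S /\
  forall X, SCC F X ->
    naive (restrict F (fun b => X b /\ ~ D F S X b)) (fun a => S a /\ X a).

Definition le_cap {T} (t1 t2 : (T -> Prop) -> Prop) : Prop :=
  forall a, (forall S1, t1 S1 -> S1 a) -> (forall S2, t2 S2 -> S2 a).

Definition le_W {T} (t1 t2 : (T -> Prop) -> Prop) : Prop :=
  forall S2, t2 S2 -> exists S1, t1 S1 /\ forall a, S1 a -> S2 a.

Definition skepticism_adequate {T : Type}
  (le : ((T -> Prop) -> Prop) -> ((T -> Prop) -> Prop) -> Prop)
  (sigma : AF T -> (T -> Prop) -> Prop) : Prop :=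
  forall F G : AF T,
    (forall a, args F a <-> args G a) ->
    (forall a b, att G a b -> att F a b) ->
    (forall x y, conf F x y <-> conf G x y) ->
    le (sigma F) (sigma G).

(* Since conf(F) = conf(G), the two frameworks have the same
   conflict-free sets, and every SCC of F lies inside an SCC of G.  Given an
   SCC Y of G and a conflict-free extension S' of S ∩ Y in G|_{Y \ D_S(Y)},
   take any c ∈ S' and its F-component X ⊆ Y.  An F-attack from S \ X onto
   S' ∩ X comes either from S ∩ Y ⊆ S' (a conflict inside S') or from outside
   Y (so its target lies in D_S(Y)); hence S' ∩ X is conflict-free in
   F|_{X \ D_S(X)}, and maximality of S ∩ X there puts c in S.
   Both adequacy claims follow, since removing attacks can only shrink the
   set of cf1.5 extensions. *)

From Stdlib Require Import Relations.Relation_Operators.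

Lemma reach_mono {T} (F G : AF T) :
  (forall a b, att F a b -> att G a b) ->
  forall x y, reach F x y -> reach G x y.
Proof.
  intros HFG x y Hxy; induction Hxy.
  - apply rt_step; auto.
  - apply rt_refl.
  - eapply rt_trans; eauto.
Qed.

Lemma conflict_free_conf {T} (F G : AF T) (S : T -> Prop) :
  (forall a, args F a -> args G a) ->
  (forall a b, att G a b -> conf F a b) ->
  conflict_free F S -> conflict_free G S.
Proof.
  intros Hargs Hconf [HSargs HScf]; split.
  - auto.
  - intros a b Sa Sb Gab.
    destruct (Hconf a b Gab) as [Fab | Fba]; [exact (HScf a b Sa Sb Fab) | exact (HScf b a Sb Sa Fba)].
Qed.

Lemma conflict_free_restrictP {T} (F : AF T) (B S : T -> Prop) :
  conflict_free (restrict F B) S <-> conflict_free F S /\ (forall a, S a -> B a).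
Proof.
  split.
  - intros [HSargs HScf]; simpl in *.
    split; [split|]; try (intros a Sa; apply HSargs, Sa).
    intros a b Sa Sb Fab.
    apply (HScf a b Sa Sb); repeat split; [exact Fab | apply HSargs, Sa | apply HSargs, Sb].
  - intros [[HSargs HScf] HSB]; split; simpl.
    + auto.
    + intros a b Sa Sb [Fab _]; exact (HScf a b Sa Sb Fab).
Qed.

Lemma conflict_free_trace {T} (F : AF T) (S X : T -> Prop) :
  conflict_free F S ->
  conflict_free (restrict F (fun b => X b /\ ~ D F S X b)) (fun a => S a /\ X a).
Proof.
  intros [HSargs HScf]; apply conflict_free_restrictP; split; [split |].
  - intros a [Sa _]; auto.
  - intros a b [Sa _] [Sb _]; auto.
  - intros b [Sb Xb]; split; [exact Xb |].
    intros [_ [a [Sa [_ Fab]]]]; exact (HScf a b Sa Sb Fab).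
Qed.

Definition scc_of {T} (F : AF T) (c : T) (b : T) : Prop :=
  args F b /\ reach F c b /\ reach F b c.

Lemma SCC_scc_of {T} (F : AF T) (c : T) : args F c -> SCC F (scc_of F c).
Proof. intros Fc; exists c; split; [exact Fc | intros b; apply iff_refl]. Qed.

Lemma scc_of_self {T} (F : AF T) (c : T) : args F c -> scc_of F c c.
Proof. intros Fc; repeat split; [exact Fc | apply rt_refl | apply rt_refl]. Qed.

Section AttackRefinement.

Variables (T : Type) (F G : AF T).
Hypothesis args_FG : forall a, args F a <-> args G a.
Hypothesis att_FG : forall a b, att F a b -> att G a b.
Hypothesis conf_FG : forall x y, conf F x y <-> conf G x y.

Lemma scc_of_sub_SCC {Y : T -> Prop} {c : T} :
  SCC G Y -> Y c -> forall b, scc_of F c b -> Y b.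
Proof.
  intros [y [_ HY]] Yc b [Fb [Rcb Rbc]].
  apply HY in Yc; destruct Yc as [_ [Ryc Rcy]].
  apply HY; repeat split.
  - apply args_FG, Fb.
  - eapply rt_trans; [exact Ryc | exact (reach_mono F G att_FG _ _ Rcb)].
  - eapply rt_trans; [exact (reach_mono F G att_FG _ _ Rbc) | exact Rcy].
Qed.

Lemma conflict_free_refine {S X Y S' : T -> Prop} :
  (forall b, X b -> Y b) ->
  conflict_free (restrict G (fun b => Y b /\ ~ D G S Y b)) S' ->
  (forall a, S a /\ Y a -> S' a) ->
  conflict_free (restrict F (fun b => X b /\ ~ D F S X b)) (fun a => S' a /\ X a).
Proof.
  intros XY HS' HSS'.
  apply conflict_free_restrictP in HS'; destruct HS' as [[HS'args HS'cf] HS'Y].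
  apply conflict_free_restrictP; split; [split |].
  - intros a [S'a _]; apply args_FG, HS'args, S'a.
  - intros a b [S'a _] [S'b _] Fab; exact (HS'cf a b S'a S'b (att_FG _ _ Fab)).
  - intros b [S'b Xb]; split; [exact Xb |].
    intros [_ [a [Sa [_ Fab]]]].
    destruct (HS'Y b S'b) as [_ nDb].
    assert (nYa : ~ Y a).
    { intros Ya; exact (HS'cf a b (HSS' a (conj Sa Ya)) S'b (att_FG _ _ Fab)). }
    apply nDb; split; [exact (XY b Xb) |].
    exists a; repeat split; [exact Sa | exact nYa | exact (att_FG _ _ Fab)].
Qed.

Lemma cf15_refine (S : T -> Prop) : cf15 F S -> cf15 G S.
Proof.
  intros [HScf HS].
  assert (HSG : conflict_free G S).
  { apply (conflict_free_conf F); [apply args_FG | intros a b Gab; apply conf_FG; left; exact Gab | exact HScf]. }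
  split; [exact HSG |].
  intros Y HY; split; [exact (conflict_free_trace G S Y HSG) |].
  intros S' HS' HSS' c S'c.
  assert (Hc : args F c /\ Y c).
  { apply conflict_free_restrictP in HS'; destruct HS' as [[HS'args _] HS'Y].
    split; [apply args_FG, HS'args, S'c | exact (proj1 (HS'Y c S'c))]. }
  destruct Hc as [Fc Yc].
  pose proof (scc_of_sub_SCC HY Yc) as XY.
  destruct (HS _ (SCC_scc_of F c Fc)) as [_ Hmax].
  assert (Sc : S c /\ scc_of F c c).
  { apply (Hmax (fun a => S' a /\ scc_of F c a)).
    - exact (conflict_free_refine XY HS' HSS').
    - intros a [Sa Xa]; split; [apply HSS'; split; [exact Sa | exact (XY a Xa)] | exact Xa].
    - split; [exact S'c | exact (scc_of_self F c Fc)]. }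
  split; [exact (proj1 Sc) | exact Yc].
Qed.

End AttackRefinement.

Lemma le_cap_sub {T} (t1 t2 : (T -> Prop) -> Prop) :
  (forall S, t2 S -> t1 S) -> le_cap t1 t2.
Proof. intros H21 a Ha S2 HS2; exact (Ha S2 (H21 S2 HS2)). Qed.

Lemma le_W_sub {T} (t1 t2 : (T -> Prop) -> Prop) :
  (forall S, t2 S -> t1 S) -> le_W t1 t2.
Proof. intros H21 S2 HS2; exists S2; split; [exact (H21 S2 HS2) | auto]. Qed.

Theorem theorem16 :
  (forall (T : Type) (F G : AF T),
      (forall a, args F a <-> args G a) ->
      (forall a b, att F a b -> att G a b) ->
      (forall x y, conf F x y <-> conf G x y) ->
      forall S, cf15 F S -> cf15 G S)
  /\ (forall T : Type, @skepticism_adequate T (@le_cap T) (@cf15 T))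
  /\ (forall T : Type, @skepticism_adequate T (@le_W T) (@cf15 T)).
Proof.
  assert (cf15_coarsen : forall (T : Type) (F G : AF T),
             (forall a, args F a <-> args G a) ->
             (forall a b, att G a b -> att F a b) ->
             (forall x y, conf F x y <-> conf G x y) ->
             forall S, cf15 G S -> cf15 F S).
  { intros T F G Hargs Hatt Hconf.
    apply cf15_refine; [intros a; apply iff_sym, Hargs | exact Hatt | intros x y; apply iff_sym, Hconf]. }
  split; [exact cf15_refine |].
  split; intros T F G Hargs Hatt Hconf.
  - apply le_cap_sub, (cf15_coarsen T F G Hargs Hatt Hconf).
  - apply le_W_sub, (cf15_coarsen T F G Hargs Hatt Hconf).
Qed.
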